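(* Let $D\ge1$ and $a_0,\dots,a_{2D-1}\in\mathbb C$ satisfy $\sum_k\overline{a_k}a_{k+2\ell}=\delta_{0,\ell}$ for all $\ell$ and $\sum_ka_k=\sqrt2$. Then for every $k\in\mathbb N$ and $i_1,\dots,i_k\in\{0,1\}$, $$\mu_0\Big(\Big[\tfrac{i_1}2+\cdots+\tfrac{i_k}{2^k},\ \tfrac{i_1}2+\cdots+\tfrac{i_k}{2^k}+\tfrac1{2^k}\Big)\Big)\ \ge\ |a_0|^{2\cdot\#\{r:i_r=0\}}\,|a_{2D-1}|^{2\cdot\#\{r:i_r=1\}}.$$
   Context: $\mathbb T$ unit circle with normalized Haar measure, $L^2(\mathbb T)$ with $\langle f\mid g\rangle=\int\overline fg$, $e_n(z)=z^n$. $m_0(z)=\sum_{k=0}^{2D-1}a_kz^k$, $m_1(z)=z^{2D-1}\overline{m_0(-z)}$, $(S_if)(z)=m_i(z)f(z^2)$. $\mu_0$ is the Borel probability measure on $[0,1]$ determined by $\mu_0([\xi,\xi+2^{-k}))=\|S_{i_k}^*\cdots S_{i_1}^*e_0\|^2$ for every $\xi=\sum_{r=1}^ki_r2^{-r}$, $i_r\in\{0,1\}$. *)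

From HB Require Import structures.
From mathcomp Require Import all_boot all_order all_algebra.
From mathcomp Require Import all_classical all_reals all_analysis.
From mathcomp Require Import complex.
Set Implicit Arguments. Unset Strict Implicit. Unset Printing Implicit Defensive.
Import Order.TTheory GRing.Theory Num.Theory.
Local Open Scope ring_scope.

(* L^2(T) is identified with l^2(Z) via the orthonormal basis e_n(z) = z^n:
   a vector f is represented by its Fourier coefficients  n |-> <e_n | f>. *)

Section Daub.
Variable R : realType.
Local Notation C := (R[i])%type.

Definition cnorm (z : C) : R := Normc.normc z.

Definition acoef (D : nat) (a : 'I_(2 * D) -> C) (k : int) : C :=
  match k with
  | Posz n => if (n < 2 * D)%N =P true is ReflectT h then a (Ordinal h) else 0
  | Negz _ => 0
  end.

(* Fourier coefficients of the filters m_0, m_1 (both supported on 0..2D-1):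
   m_0(z) = sum_k a_k z^k,
   m_1(z) = z^(2D-1) conj(m_0(-z)) = sum_j (-1)^(2D-1-j) conj(a_(2D-1-j)) z^j
   (on T, conj(z) = z^-1). *)
Definition mcoef (D : nat) (a : 'I_(2 * D) -> C) (b : bool) (j : nat) : C :=
  if b then (-1) ^+ (2 * D - 1 - j) * (acoef a (Posz (2 * D - 1 - j)%N))^*%C
  else acoef a (Posz j).

Definition e0 : int -> C := fun n => if n == 0 then 1 else 0.

(* S_b f(z) = m_b(z) f(z^2), so <e_m | S_b e_n> = mcoef b (m - 2n).
   Its adjoint is  (S_b^* v)_n = sum_m conj(<e_m | S_b e_n>) v_m
                               = sum_(j < 2D) conj(mcoef b j) v_(2n+j). *)
Definition Sadj (D : nat) (a : 'I_(2 * D) -> C) (b : bool) (v : int -> C)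
  : int -> C :=
  fun n => \sum_(j < 2 * D) (mcoef a b j)^*%C * v (2 * n + j%:Z).

(* S_(i_k)^* ... S_(i_1)^* e_0 for s = [:: i_1; ...; i_k] *)
Definition Sadj_word (D : nat) (a : 'I_(2 * D) -> C) (s : seq bool)
  : int -> C :=
  foldl (fun v b => Sadj a b v) e0 s.

Definition l2normsq (v : int -> C) : \bar R :=
  (\esum_(n in [set: int]) ((cnorm (v n)) ^+ 2)%:E)%E.

Definition dyadic (s : seq bool) : R :=
  \sum_(r < size s) (nth false s r)%:R / 2 ^+ r.+1.

End Daub.

From HB Require Import structures.
From mathcomp Require Import all_boot all_order all_algebra.
From mathcomp Require Import all_classical all_reals all_analysis.
From mathcomp Require Import complex.
Import Order.TTheory GRing.Theory Num.Theory.
Local Open Scope ring_scope.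
Local Open Scope classical_set_scope.

(* The filters m_0, m_1 have no negative Fourier modes, so each adjoint S_b^*
   preserves the sequences supported on the nonpositive integers and acts on
   their 0-th coefficient as multiplication by conj(m_b(0)), i.e. by conj(a_0)
   or by -a_(2D-1).  The 0-th coefficient of S_(i_k)^* ... S_(i_1)^* e_0 thus
   has modulus |a_0|^#{r : i_r = 0} |a_(2D-1)|^#{r : i_r = 1}, and its square
   is a lower bound for the squared norm of that vector. *)

Section Cascade_adjoints.
Variable R : realType.
Local Notation C := (R[i])%type.

Lemma cnormJ (z : C) : cnorm z^*%C = cnorm z.
Proof. by case: z => x y; rewrite /cnorm /= sqrrN. Qed.

Lemma cnorm1 : cnorm (1 : C) = 1.
Proof. exact: Normc.normc1. Qed.

Lemma cnormM (z w : C) : cnorm (z * w) = cnorm z * cnorm w.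
Proof. exact: Normc.normcM. Qed.

Lemma cnorm_sign n : cnorm ((-1 : C) ^+ n) = 1.
Proof.
elim: n => [|n IHn]; first exact: cnorm1.
by rewrite exprS cnormM IHn mulr1 /cnorm /= oppr0 expr0n addr0 sqrrN expr1n sqrtr1.
Qed.

Lemma prod_if_count (T : comPzSemiRingType) (x y : T) (s : seq bool) :
  \prod_(b <- s) (if b then y else x)
  = x ^+ count (fun b => ~~ b) s * y ^+ count id s.
Proof.
elim: s => [|[] s IHs]; first by rewrite big_nil mulr1.
- by rewrite big_cons IHs /= exprS mulrCA.
- by rewrite big_cons IHs /= exprS mulrA.
Qed.

Lemma l2normsq_ge_coef (v : int -> C) (n : int) :
  (((cnorm (v n)) ^+ 2)%:E <= l2normsq v)%E.
Proof.
apply: esum_ge; exists [set n]; first by split; [exact: finite_set1 | by []].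
by rewrite fsbig_set1.
Qed.

Definition supported_nonpos (v : int -> C) := forall n : int, 0 < n -> v n = 0.

Variables (D : nat) (a : 'I_(2 * D) -> C).

Lemma cnorm_mcoef0 b :
  cnorm (mcoef a b 0) = cnorm (acoef a (if b then (2 * D - 1)%N else 0%N)).
Proof. by case: b; rewrite /mcoef // subn0 cnormM cnorm_sign mul1r cnormJ. Qed.

Lemma Sadj_supported_nonpos b v :
  supported_nonpos v -> supported_nonpos (Sadj a b v).
Proof.
move=> v_nonpos n n_gt0; rewrite /Sadj big1 // => j _; rewrite v_nonpos ?mulr0 //.
by rewrite (lt_le_trans (_ : 0 < 2 * n)) ?mulr_gt0 ?lerDl.
Qed.

Lemma Sadj0 b v : (0 < D)%N -> supported_nonpos v ->
  Sadj a b v 0 = (mcoef a b 0)^*%C * v 0.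
Proof.
move=> D_gt0 v_nonpos; have twoD_gt0 : (0 < 2 * D)%N by rewrite muln_gt0.
rewrite /Sadj (bigD1 (Ordinal twoD_gt0)) //= mulr0 add0r big1 ?addr0 // => j j_neq0.
rewrite add0r v_nonpos ?mulr0 // ltz_nat lt0n.
by apply: contra j_neq0 => /eqP j0; apply/eqP/val_inj.
Qed.

Lemma Sadj_word_supported_nonpos s : supported_nonpos (Sadj_word a s).
Proof.
elim/last_ind: s => [n n_gt0 | s b IHs]; first by rewrite /Sadj_word /= /e0 gt_eqF.
by rewrite /Sadj_word foldl_rcons; apply: Sadj_supported_nonpos.
Qed.

Lemma Sadj_word0 s : (0 < D)%N ->
  Sadj_word a s 0 = \prod_(b <- s) (mcoef a b 0)^*%C.
Proof.
move=> D_gt0; elim/last_ind: s => [|s b IHs]; first by rewrite big_nil /Sadj_word /= /e0.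
rewrite /Sadj_word foldl_rcons -/(Sadj_word a s) Sadj0 //.
  by rewrite IHs big_rcons /= mulrC.
exact: Sadj_word_supported_nonpos.
Qed.

Lemma cnorm_Sadj_word0 s : (0 < D)%N ->
  cnorm (Sadj_word a s 0)
  = cnorm (acoef a 0) ^+ count (fun b => ~~ b) s
    * cnorm (acoef a (2 * D - 1)%N) ^+ count id s.
Proof.
move=> D_gt0; rewrite Sadj_word0 // -prod_if_count.
rewrite (big_morph _ cnormM cnorm1).
by apply: eq_bigr => b _; rewrite cnormJ cnorm_mcoef0; case: b.
Qed.

End Cascade_adjoints.

Theorem proposition3p8 (R : realType) (D : nat) (hD : (1 <= D)%N)
  (a : 'I_(2 * D) -> R[i])
  (horth : forall l : int,
     \sum_(k < 2 * D) (a k)^*%C * acoef a (k%:Z + 2 * l) = (l == 0)%:R)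
  (hsum : \sum_(k < 2 * D) a k = real_complex R (Num.sqrt (2 : R)))
  (mu0 : probability R R)
  (hsupp : mu0 `[0, 1] = 1%E)
  (hmu : forall s : seq bool,
     mu0 `[dyadic R s, (dyadic R s + 2 ^- size s)%R[ = l2normsq (Sadj_word a s)) :
  forall s : seq bool,
    (((cnorm (acoef a 0)) ^+ (2 * count (fun b => ~~ b) s)
      * (cnorm (acoef a (2 * D - 1)%N)) ^+ (2 * count id s))%:E
     <= mu0 `[dyadic R s, (dyadic R s + 2 ^- size s)%R[)%E.
Proof.
(* [horth], [hsum] and [hsupp] only make [mu0] exist; the bound needs [hmu] alone. *)
move=> s; rewrite hmu; apply: le_trans (l2normsq_ge_coef _ _ 0); rewrite lee_fin.
by rewrite cnorm_Sadj_word0 // exprMn -!exprM ![(2 * _)%N]mulnC.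
Qed.
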